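(* Let $m,n\ge 1$, let $A\in\mathbb{R}^{m\times n}$ be a nonzero matrix of rank $r$ with thin singular value decomposition $A=U_A\Sigma_A V_A^\top$ (so $U_A\in\mathbb{R}^{m\times r}$ has orthonormal columns), let $y\in\mathbb{R}^m$ be nonzero and set $\bar y=y/\|y\|_2$. Let $\mathcal{P}$ be the set of $m\times m$ permutation matrices and $$\operatorname{conv}(\mathcal{P})=\{B\in\mathbb{R}^{m\times m}: B^\top e=e,\ Be=e,\ B\ge 0\}$$ the set of $m\times m$ doubly stochastic matrices, where $e\in\mathbb{R}^m$ is the all-ones vector and $B\ge 0$ means entrywise nonnegativity. Define $f:\mathbb{R}^{m\times m}\to\mathbb{R}$ by $$f(B)=-\big\|(\bar y^\top\otimes U_A^\top)\,\mathrm{vec}(B)\big\|_2^2,$$ where $\otimes$ is the Kronecker product and $\mathrm{vec}$ stacks the columns of a matrix. If the problem $\min_{\Pi\in\mathcal{P}} f(\Pi)$ has a unique minimizer $\hat\Pi$, then $\hat\Pi$ is also the unique minimizer of $\min_{B\in\operatorname{conv}(\mathcal{P})} f(B)$.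
   Context: Notation: $\|\cdot\|_2$ is the Euclidean norm. The function $f$ satisfies $f(B)=-\bar y^\top B^\top U_AU_A^\top B\bar y$, and is concave. *)

From HB Require Import structures.
From mathcomp Require Import all_boot all_order all_algebra.
From mathcomp Require Import reals.
From mathcomp Require Import mxtens.
Set Implicit Arguments. Unset Strict Implicit. Unset Printing Implicit Defensive.
Import Order.TTheory GRing.Theory Num.Theory.
Local Open Scope ring_scope.

Definition norm2 {R : realType} {k : nat} (v : 'cV[R]_k) : R :=
  Num.sqrt (\sum_(i < k) v i 0 ^+ 2).

(* vec(B): stacks the columns of B : 'M_(m,n) into a column of length n*m;
   entry j*m + i (= mxtens_index (j,i)) is B i j, consistent with the
   Kronecker-product indexing of tensmx (A *t B). *)
Definition vecmx {R : realType} {m n : nat} (B : 'M[R]_(m, n)) : 'cV[R]_(n * m) :=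
  \col_k B (mxtens_unindex k).2 (mxtens_unindex k).1.

Definition ones {R : realType} (m : nat) : 'cV[R]_m := const_mx 1.

Definition doubly_stochastic {R : realType} {m : nat} (B : 'M[R]_m) : Prop :=
  B^T *m ones m = ones m /\ B *m ones m = ones m /\ (forall i j, 0 <= B i j).

Definition thin_svd {R : realType} {m n r : nat} (A : 'M[R]_(m, n))
  (U : 'M[R]_(m, r)) (s : 'rV[R]_r) (V : 'M[R]_(n, r)) : Prop :=
  [/\ r = \rank A, U^T *m U = 1%:M, V^T *m V = 1%:M,
      (forall i, 0 < s 0 i) /\ (forall i j : 'I_r, (i <= j)%N -> s 0 j <= s 0 i)
    & A = U *m diag_mx s *m V^T].

Definition fobj {R : realType} {m r : nat} (U : 'M[R]_(m, r)) (ybar : 'cV[R]_m)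
  (B : 'M[R]_m) : R :=
  - (norm2 ((ybar^T *t U^T) *m vecmx B)) ^+ 2.

From HB Require Import structures.
From mathcomp Require Import all_boot all_order all_algebra.
From mathcomp Require Import reals mxtens.
From mathcomp Require Import perm ring lra zify.
Import Order.TTheory GRing.Theory Num.Theory.
Local Open Scope ring_scope.

(* The objective is concave (minus the squared norm of a linear image of B), so
   it suffices that a strict minimum over the permutation matrices persists
   over the doubly stochastic matrices. Argue by induction on the number of
   fractional entries of a doubly stochastic B; without any, B is a permutation
   matrix. Otherwise every row and column meeting a fractional entry contains
   at least two of them, so there are at least as many fractional cells as such
   lines, while the line-sum constraints on these cells are linearly dependent
   (all row sums together equal all column sums together): some nonzero D
   supported on the fractional cells has zero row and column sums. Moving from
   B along D and along -D until an entry vanishes writes B as a proper convex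
   combination of two distinct doubly stochastic matrices with fewer fractional
   entries, and concavity concludes. *)

Definition concave {R : realType} {V : lmodType R} (f : V -> R) :=
  forall x y (l : R), 0 <= l <= 1 ->
    l * f x + (1 - l) * f y <= f (l *: x + (1 - l) *: y).

Definition balanced {R : realType} {m n : nat} (D : 'M[R]_(m, n)) :=
  D *m ones n = 0 /\ D^T *m ones m = 0.

Definition fractional {R : realType} {m n : nat} (B : 'M[R]_(m, n)) :
  {set 'I_m * 'I_n} := [set p | 0 < B p.1 p.2 < 1].

Section Concavity.
Context {R : realType}.

Lemma concave_comp {U V : lmodType R} {f : V -> R} (L : {linear U -> V}) :
  concave f -> concave (f \o L).
Proof. by move=> cf x y l l01; rewrite /= linearD !linearZ; exact: cf. Qed.

Lemma concave_neg_sqr_norm2 k : concave (fun v : 'cV[R]_k => - norm2 v ^+ 2).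
Proof.
move=> v w l /andP[l0 l1].
have sqr_norm2 u : norm2 u ^+ 2 = \sum_i u i 0 ^+ 2 :> R.
  by rewrite sqr_sqrtr // sumr_ge0 // => i _; exact: sqr_ge0.
rewrite !sqr_norm2 !mulrN !mulr_sumr -opprD -big_split lerN2 /=.
apply: ler_sum => i _; rewrite !mxE -subr_ge0.
set a := v i 0; set b := w i 0.
have -> : l * a ^+ 2 + (1 - l) * b ^+ 2 - (l * a + (1 - l) * b) ^+ 2
        = l * (1 - l) * (a - b) ^+ 2 by ring.
by rewrite mulr_ge0 ?sqr_ge0 // mulr_ge0 // subr_ge0.
Qed.

Lemma vecmx_is_linear m n : linear (@vecmx R m n).
Proof. by move=> a X Y; apply/matrixP => i j; rewrite !mxE. Qed.

HB.instance Definition _ m n :=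
  GRing.isLinear.Build R 'M[R]_(m, n) 'cV[R]_(n * m) _ (@vecmx R m n)
    (@vecmx_is_linear m n).

Lemma fobj_concave {m r : nat} (U : 'M[R]_(m, r)) (ybar : 'cV[R]_m) :
  concave (fobj U ybar).
Proof.
exact: (concave_comp (mulmx (ybar^T *t U^T) \o vecmx)
          (concave_neg_sqr_norm2 _)).
Qed.

Lemma lt_convex_comb (a b c l : R) : 0 < l < 1 -> a <= b -> a <= c ->
  (a < b) || (a < c) -> a < l * b + (1 - l) * c.
Proof.
move=> /andP[l0 l1] ab ac /orP[] lt.
  have : 0 < l * (b - a) by rewrite mulr_gt0 ?subr_gt0.
  have : 0 <= (1 - l) * (c - a) by rewrite mulr_ge0 ?subr_ge0 // ltW.
  lra.
have : 0 <= l * (b - a) by rewrite mulr_ge0 ?subr_ge0 // ltW.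
have : 0 < (1 - l) * (c - a) by rewrite mulr_gt0 ?subr_gt0.
lra.
Qed.

End Concavity.

Section LineSums.
Context {R : realType}.

Lemma mulmx_ones_const m n (A : 'M[R]_(m, n)) (c : R) :
  A *m ones n = const_mx c <-> forall i, \sum_j A i j = c.
Proof.
split=> [/matrixP eqAc i | sumA]; last first.
  apply/matrixP => i k; rewrite !mxE -(sumA i).
  by apply: eq_bigr => j _; rewrite mxE mulr1.
have := eqAc i 0; rewrite !mxE => <-.
by apply: eq_bigr => j _; rewrite mxE mulr1.
Qed.

Lemma doubly_stochasticP m (B : 'M[R]_m) : doubly_stochastic B <->
  [/\ forall i, \sum_j B i j = 1, forall j, \sum_i B i j = 1
    & forall i j, 0 <= B i j].
Proof.
have colE j : \sum_i B^T j i = \sum_i B i j.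
  by apply: eq_bigr => i _; rewrite mxE.
split=> [[/mulmx_ones_const col [/mulmx_ones_const row B_ge0]]|[row col B_ge0]].
  by split=> // j; rewrite -colE.
by split; [|split] => //; apply/mulmx_ones_const => // j; rewrite colE.
Qed.

Lemma balancedP m n (D : 'M[R]_(m, n)) : balanced D <->
  (forall i, \sum_j D i j = 0) /\ (forall j, \sum_i D i j = 0).
Proof.
have colE j : \sum_i D^T j i = \sum_i D i j.
  by apply: eq_bigr => i _; rewrite mxE.
split=> [[/mulmx_ones_const row /mulmx_ones_const col] | [row col]].
  by split=> // j; rewrite -colE.
by split; apply/mulmx_ones_const => // j; rewrite colE.
Qed.

Lemma balancedZ m n (a : R) (D : 'M[R]_(m, n)) :
  balanced D -> balanced (a *: D).
Proof.
by case=> row col; split; rewrite ?linearZ -scalemxAl ?row ?col scaler0.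
Qed.

Lemma balancedN m n (D : 'M[R]_(m, n)) : balanced D -> balanced (- D).
Proof. by rewrite -scaleN1r; exact: balancedZ. Qed.

Lemma balanced_neg_entry {m n : nat} {D : 'M[R]_(m, n)} :
  balanced D -> D != 0 -> exists i j, D i j < 0.
Proof.
case/balancedP=> row _; rewrite matrix_eq0 negb_forall => /existsP[i].
rewrite negb_forall => /existsP[j Dij].
have /existsP[k Dik] : [exists k, D i k < 0]; last by exists i, k.
apply: contraT; rewrite negb_exists => /forallP Di_nlt0.
have Di_ge0 k : 0 <= D i k by rewrite leNgt Di_nlt0.
have /eqP := @psumr_eq0P _ _ _ _ (fun k _ => Di_ge0 k) (row i) j isT.
by rewrite (negPf Dij).
Qed.

Lemma perm_mx_doubly_stochastic m (s : 'S_m) :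
  doubly_stochastic (perm_mx s : 'M[R]_m).
Proof.
have perm_ones (t : 'S_m) : perm_mx t *m ones m = ones m :> 'cV[R]_m.
  by rewrite -row_permE; apply/matrixP => i j; rewrite !mxE.
by split; [|split] => [||i j]; rewrite ?tr_perm_mx ?perm_ones // !mxE ler0n.
Qed.

Lemma doubly_stochasticD m (B D : 'M[R]_m) :
  doubly_stochastic B -> balanced D -> (forall i j, 0 <= (B + D) i j) ->
  doubly_stochastic (B + D).
Proof.
move=> [col [row _]] [rowD colD] BD_ge0.
by split; [|split] => //; rewrite ?linearD mulmxDl ?col ?row ?rowD ?colD addr0.
Qed.

End LineSums.

Section Fractional.
Context {R : realType}.

Lemma ler_term_sum {I : finType} (P : pred I) (x : I -> R) j :
  P j -> (forall i, P i -> 0 <= x i) -> x j <= \sum_(i | P i) x i.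
Proof.
by move=> Pj x_ge0; rewrite (bigD1 j) //= lerDl sumr_ge0 // => i /andP[/x_ge0].
Qed.

Lemma stochastic_eq1_others0 {I : finType} {x : I -> R} {j0 : I} :
  (forall j, 0 <= x j) -> \sum_j x j = 1 -> x j0 = 1 ->
  forall j, j != j0 -> x j = 0.
Proof.
move=> x_ge0 sum1 x1; apply: psumr_eq0P => [j _ //|].
by move: sum1; rewrite (bigD1 j0) //= x1; lra.
Qed.

Lemma stochastic_second_fractional {I : finType} {x : I -> R} {j0 : I} :
  (forall j, 0 <= x j) -> \sum_j x j = 1 -> 0 < x j0 < 1 ->
  exists2 j1, j1 != j0 & 0 < x j1 < 1.
Proof.
move=> x_ge0 sum1 /andP[x0 x1].
have rest : \sum_(j | j != j0) x j = 1 - x j0.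
  by move: sum1; rewrite (bigD1 j0) //=; lra.
have /existsP[j1 /andP[j1j0 x_j1]] : [exists j1, (j1 != j0) && (0 < x j1)].
  apply: contraT; rewrite negb_exists => /forallP x_le0.
  suff : \sum_(j | j != j0) x j = 0 by lra.
  apply: big1 => j jj0; apply/le_anti; rewrite x_ge0 andbT.
  by have := x_le0 j; rewrite jj0 /= -leNgt.
exists j1 => //; rewrite x_j1 /=.
have := @ler_term_sum _ (fun j => j != j0) x j1 j1j0 (fun j _ => x_ge0 j).
by rewrite rest; lra.
Qed.

Lemma doubly_stochastic_le1 m (B : 'M[R]_m) i j :
  doubly_stochastic B -> B i j <= 1.
Proof.
by case/doubly_stochasticP=> row _ B_ge0; rewrite -(row i) ler_term_sum.
Qed.

Lemma doubly_stochastic_perm_mx m (B : 'M[R]_m) :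
  doubly_stochastic B -> fractional B = set0 -> is_perm_mx B.
Proof.
move=> dsB noF; have /doubly_stochasticP[row col B_ge0] := dsB.
have B01 i j : (B i j == 0) || (B i j == 1).
  have : (i, j) \notin fractional B by rewrite noF inE.
  rewrite inE /= negb_and -!leNgt => /orP[B_le0|B_ge1].
    by rewrite eq_le B_le0 B_ge0.
  by rewrite orbC eq_le B_ge1 doubly_stochastic_le1.
have /fin_all_exists[s Bs1] : forall i, exists j, B i j = 1.
  move=> i; have /existsP[j /eqP] : [exists j, B i j == 1]; last by exists j.
  apply: contraT; rewrite negb_exists => /forallP B_ne1.
  have : \sum_j B i j = 0.
    apply: big1 => j _.
    by move: (B01 i j); rewrite (negPf (B_ne1 j)) orbF => /eqP.
  by rewrite row => /eqP; rewrite oner_eq0.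
have s_inj : injective s.
  move=> i i' s_ii'; apply/eqP; apply: contraT => i'i.
  have := stochastic_eq1_others0 (B_ge0 ^~ (s i)) (col (s i)) (Bs1 i).
  rewrite eq_sym in i'i; move/(_ i' i'i).
  by rewrite s_ii' Bs1 => /eqP; rewrite oner_eq0.
apply/is_perm_mxP; exists (perm s_inj); apply/matrixP => i j.
rewrite /perm_mx !mxE permE; have [<-|sij] := eqVneq (s i) j; first exact: Bs1.
by rewrite (stochastic_eq1_others0 (B_ge0 i) (row i) (Bs1 i)) // eq_sym.
Qed.

Lemma card_imset_no_singleton_fibers (T K : finType) (p : T -> K)
    (F : {set T}) :
  (forall x, x \in F -> exists2 y, y \in F & (y != x) && (p y == p x)) ->
  (2 * #|p @: F| <= #|F|)%N.
Proof.
move=> fibers; rewrite -[#|F|]sum1_card (partition_big_imset p) /=.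
rewrite mulnC -sum_nat_const.
apply: leq_sum => _ /imsetP[x Fx ->]; rewrite sum1dep_card.
have [y Fy /andP[yx /eqP pyx]] := fibers x Fx.
by apply/card_gt1P; exists x, y; rewrite !inE Fx Fy pyx eqxx eq_sym yx.
Qed.

Lemma card_fractional_lines {m : nat} {B : 'M[R]_m} : doubly_stochastic B ->
  (#|fst @: fractional B| + #|snd @: fractional B| <= #|fractional B|)%N.
Proof.
case/doubly_stochasticP=> row col B_ge0.
have rows2 : (2 * #|fst @: fractional B| <= #|fractional B|)%N.
  apply: card_imset_no_singleton_fibers => -[i j]; rewrite inE /= => Bij.
  have [j' j'j Bij'] := stochastic_second_fractional (B_ge0 i) (row i) Bij.
  by exists (i, j'); rewrite ?inE //= xpair_eqE !eqxx ?andbT j'j.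
have cols2 : (2 * #|snd @: fractional B| <= #|fractional B|)%N.
  apply: card_imset_no_singleton_fibers => -[i j]; rewrite inE /= => Bij.
  have [i' i'i Bi'j] := stochastic_second_fractional (B_ge0 ^~ j) (col j) Bij.
  by exists (i', j); rewrite ?inE //= xpair_eqE !eqxx ?andbT i'i.
lia.
Qed.

End Fractional.

Lemma left_kernel_neq0 {K : fieldType} {p q : nat} {M : 'M[K]_(p, q)}
    {w : 'cV_q} :
  w != 0 -> M *m w = 0 -> (q <= p)%N -> exists2 v : 'rV_p, v != 0 & v *m M = 0.
Proof.
move=> w_neq0 Mw q_le_p.
have wT_ker : (w^T <= kermx M^T)%MS.
  by apply/sub_kermxP; rewrite -trmx_mul Mw trmx0.
have rankM : (\rank M < p)%N.
  have := mxrankS wT_ker.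
  by rewrite mxrank_ker rank_rV trmx_eq0 w_neq0 mxrank_tr; lia.
have : kermx M != 0 by rewrite kermx_eq0 /row_free ltn_eqF.
by case/rowV0Pn=> v /sub_kermxP vM v_neq0; exists v.
Qed.

Section BalancedDirection.
Context {R : realType} {m n : nat} {F : {set 'I_m * 'I_n}}.

Let ev (q : 'I_#|F|) : 'I_m * 'I_n := enum_val q.

Let incidence {K : finType} (p : 'I_m * 'I_n -> K) : 'M[R]_(#|F|, #|p @: F|) :=
  \matrix_(q, a) (p (ev q) == enum_val a)%:R.

Lemma incidence_ones (K : finType) (p : 'I_m * 'I_n -> K) :
  incidence p *m ones _ = ones _.
Proof.
apply/mulmx_ones_const => q; under eq_bigr do rewrite mxE.
rewrite -(big_enum_val (fun k => (p (ev q) == k)%:R)) /=.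
rewrite (bigD1 (p (ev q))) ?imset_f ?enum_valP //= eqxx big1 ?addr0 //.
by move=> k /andP[_ /negPf]; rewrite eq_sym => ->.
Qed.

Lemma incidence_left_kernel {K : finType} {p : 'I_m * 'I_n -> K}
    {v : 'rV[R]_#|F|} :
  v *m incidence p = 0 -> forall k, \sum_(q | p (ev q) == k) v 0 q = 0.
Proof.
move=> vM k; have [Fk|Fk] := boolP (k \in p @: F).
  move/rowP/(_ (enum_rank_in Fk k)): vM; rewrite !mxE => vMk.
  rewrite -{}[RHS]vMk big_mkcond; apply: eq_bigr => q _.
  by rewrite mxE enum_rankK_in // mulr_natr mulrb.
rewrite big1 // => q /eqP pq; case/negP: Fk.
by rewrite -pq imset_f //; exact: enum_valP.
Qed.

Lemma balanced_direction :
  F != set0 -> (#|fst @: F| + #|snd @: F| <= #|F|)%N ->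
  exists D : 'M[R]_(m, n),
    [/\ D != 0, balanced D & forall i j, (i, j) \notin F -> D i j = 0].
Proof.
move=> F_neq0 card_lines.
(* Unknowns are indexed by the cells of F and equations by the rows and the
   columns meeting F; each cell lies in exactly one of each, whence w. *)
pose w : 'cV[R]_(#|fst @: F| + #|snd @: F|) := col_mx (ones _) (- ones _).
have w_neq0 : w != 0.
  have [[i j] Fij] := set0Pn _ F_neq0.
  have rows_gt0 : (0 < #|fst @: F|)%N.
    by apply/card_gt0P; exists i; rewrite (imset_f fst Fij).
  rewrite col_mx_eq0 negb_and; apply/orP; left.
  by apply/eqP => /matrixP/(_ (Ordinal rows_gt0) 0)/eqP; rewrite !mxE oner_eq0.
have Mw : row_mx (incidence fst) (incidence snd) *m w = 0.
  by rewrite mul_row_col mulmxN !incidence_ones subrr.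
have [v v_neq0 vM] := left_kernel_neq0 w_neq0 Mw card_lines.
have [vM1 vM2] : v *m incidence fst = 0 /\ v *m incidence snd = 0.
  by apply/eq_row_mx; rewrite -mul_mx_row vM row_mx0.
pose D := \matrix_(i, j) \sum_(q | ((ev q).1 == i) && ((ev q).2 == j)) v 0 q.
have Dev q : D (ev q).1 (ev q).2 = v 0 q.
  rewrite mxE (big_pred1 q) // => q'.
  by rewrite /= -xpair_eqE -!surjective_pairing (inj_eq enum_val_inj).
exists D; split.
- apply: contraNneq v_neq0 => D0; apply/eqP/rowP => q; by rewrite -Dev D0 !mxE.
- apply/balancedP; split => [i|j].
    apply: etrans (incidence_left_kernel vM1 i).
    rewrite [RHS](partition_big (fun q => (ev q).2) xpredT) //=.
    by apply: eq_bigr => j _; rewrite mxE.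
  apply: etrans (incidence_left_kernel vM2 j).
  rewrite [RHS](partition_big (fun q => (ev q).1) xpredT) //=.
  by apply: eq_bigr => i _; rewrite mxE; apply: eq_bigl => q; rewrite andbC.
- move=> i j Fij; rewrite mxE big_pred0 // => q.
  apply: contraNF Fij => /andP[/eqP<- /eqP<-].
  by rewrite -surjective_pairing; exact: enum_valP.
Qed.

End BalancedDirection.

Section Perturbation.
Context {R : realType} {m : nat}.

Lemma doubly_stochastic_perturb {B D : 'M[R]_m} :
  doubly_stochastic B -> balanced D ->
  (forall i j, (i, j) \notin fractional B -> D i j = 0) ->
  (exists i j, D i j < 0) ->
  exists2 t, 0 < t & doubly_stochastic (B + t *: D) /\
                     (#|fractional (B + t *: D)| < #|fractional B|)%N.
Proof.
move=> dsB balD suppD [i0 [j0 Dij0]].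
have /doubly_stochasticP[_ _ B_ge0] := dsB.
(* t is the largest step keeping B + t D nonnegative *)
pose ratio (p : 'I_m * 'I_m) := B p.1 p.2 / - D p.1 p.2.
case: (@arg_minP _ _ _ (i0, j0) (fun p => D p.1 p.2 < 0) ratio Dij0).
move=> -[i j] /= Dij ratio_min; set t := ratio (i, j).
have Fij : (i, j) \in fractional B.
  by apply: contraTT Dij => /suppD ->; rewrite ltxx.
have Bij : 0 < B i j by move: Fij; rewrite inE => /andP[].
have t_gt0 : 0 < t by rewrite divr_gt0 // oppr_gt0.
have t_hits0 : B i j + t * D i j = 0.
  by rewrite /t /ratio /=; field; rewrite lt_eqF.
exists t => //; split.
  apply: doubly_stochasticD => //; first exact: balancedZ.
  move=> k l; rewrite !mxE.
  have [Dkl_lt0|Dkl_ge0] := ltP (D k l) 0.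
    have := ratio_min (k, l) Dkl_lt0.
    by rewrite -/t /ratio /= ler_pdivlMr ?oppr_gt0 // mulrN; lra.
  by rewrite addr_ge0 // mulr_ge0 // ltW.
apply: proper_card; apply/properP; split.
  apply/subsetP => -[k l]; apply: contraTT => kl_nF.
  by move: (kl_nF); rewrite !inE !mxE /= suppD // mulr0 addr0.
by exists (i, j) => //; rewrite inE !mxE /= t_hits0 ltxx.
Qed.

Lemma doubly_stochastic_split {B : 'M[R]_m} :
  doubly_stochastic B -> fractional B != set0 ->
  exists B1 B2 (l : R), [/\ 0 < l < 1, B = l *: B1 + (1 - l) *: B2, B1 != B2,
    doubly_stochastic B1 /\ (#|fractional B1| < #|fractional B|)%N
  & doubly_stochastic B2 /\ (#|fractional B2| < #|fractional B|)%N].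
Proof.
move=> dsB F_neq0.
have [D [D_neq0 balD suppD]] :=
  @balanced_direction R _ _ _ F_neq0 (card_fractional_lines dsB).
have [t1 t1_gt0 [ds1 lt1]] :=
  doubly_stochastic_perturb dsB balD suppD (balanced_neg_entry balD D_neq0).
have balND : balanced (- D) by exact: balancedN.
have suppND i j : (i, j) \notin fractional B -> (- D) i j = 0.
  by move=> /suppD; rewrite mxE => ->; rewrite oppr0.
have ND_neq0 : - D != 0 by rewrite oppr_eq0.
have [t2 t2_gt0 [ds2 lt2]] := doubly_stochastic_perturb dsB balND suppND
  (balanced_neg_entry balND ND_neq0).
exists (B + t1 *: D), (B + t2 *: - D), (t2 / (t1 + t2)); split => //.
- by rewrite divr_gt0 ?addr_gt0 //= ltr_pdivrMr ?addr_gt0 // mul1r ltrDr.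
- by apply/matrixP => i j; rewrite !mxE; field; rewrite gt_eqF ?addr_gt0.
apply: contraNneq D_neq0 => /addrI/eqP.
by rewrite scalerN -subr_eq0 opprK -scalerDl scaler_eq0 gt_eqF ?addr_gt0.
Qed.

End Perturbation.

Section ConcaveMinimum.
Context {R : realType} {m : nat} {f : 'M[R]_m -> R} {Pihat : 'M[R]_m}.
Hypothesis f_concave : concave f.
Hypothesis Pihat_min : forall P, is_perm_mx P -> P != Pihat -> f Pihat < f P.

Lemma concave_min_over_doubly_stochastic B :
  doubly_stochastic B -> B != Pihat -> f Pihat < f B.
Proof.
have [k] := ubnP #|fractional B|; elim: k B => // k IHk B lt_Bk dsB B_neq.
have [F0|F_neq0] := eqVneq (fractional B) set0.
  exact/Pihat_min/B_neq/doubly_stochastic_perm_mx.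
have [B1 [B2 [l [l01 defB B12 [ds1 lt1] [ds2 lt2]]]]] :=
  doubly_stochastic_split dsB F_neq0.
have lt_min X : doubly_stochastic X -> (#|fractional X| < #|fractional B|)%N ->
    X != Pihat -> f Pihat < f X.
  by move=> dsX ltX; apply: IHk dsX; lia.
have le_min X : doubly_stochastic X -> (#|fractional X| < #|fractional B|)%N ->
    f Pihat <= f X.
  by move=> dsX ltX; have [->|/(lt_min _ dsX ltX)/ltW] := eqVneq X Pihat.
have l_01 : 0 <= l <= 1 by case/andP: l01 => l_gt0 l_lt1; rewrite !ltW.
rewrite defB; apply: (lt_le_trans _ (f_concave B1 B2 _ l_01)).
apply: lt_convex_comb; rewrite ?le_min //.
have [B1P|B1_neq] := eqVneq B1 Pihat; last by rewrite (lt_min B1).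
by rewrite (lt_min B2) ?orbT // -B1P eq_sym.
Qed.

End ConcaveMinimum.

Theorem proposition1 (R : realType) (m n r : nat) (A : 'M[R]_(m, n))
  (U : 'M[R]_(m, r)) (s : 'rV[R]_r) (V : 'M[R]_(n, r)) (y : 'cV[R]_m)
  (Pihat : 'M[R]_m) :
  (0 < m)%N -> (0 < n)%N -> A != 0 -> thin_svd A U s V -> y != 0 ->
  let ybar := (norm2 y)^-1 *: y in
  is_perm_mx Pihat ->
  (forall Pi : 'M[R]_m, is_perm_mx Pi -> Pi != Pihat ->
     fobj U ybar Pihat < fobj U ybar Pi) ->
  doubly_stochastic Pihat /\
  (forall B : 'M[R]_m, doubly_stochastic B -> B != Pihat ->
     fobj U ybar Pihat < fobj U ybar B).
Proof.
move=> _ _ _ _ _ ybar /is_perm_mxP[sigma ->] Pihat_min.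
split; first exact: perm_mx_doubly_stochastic.
exact: (concave_min_over_doubly_stochastic (fobj_concave U ybar) Pihat_min).
Qed.
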